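(* Let $R$ be a simple Bezout domain. Then $R$ is a D-K elementary divisor ring if and only if for every nonzero $a\in R$ there exist $u_1,u_2,v_1,v_2\in R$ such that $u_1av_1+u_2av_2=1$.
   Context: All rings are associative with nonzero identity. A simple ring is one with no two-sided ideals other than $0$ and $R$. A Bezout domain is a domain in which every finitely generated right ideal and every finitely generated left ideal is principal. A nonzero element $a$ is invariant if $aR=Ra$. For $x\in R$, $RxR$ denotes the two-sided ideal generated by $x$. Two matrices $A,B$ over $R$ are equivalent if $B=PAQ$ for invertible $P,Q$. $R$ is a D-K elementary divisor ring if every (rectangular) matrix over $R$ is equivalent to a matrix $\mathrm{diag}(\varepsilon_1,\dots,\varepsilon_r,0,\dots,0)$ such that $R\varepsilon_{i+1}R\subseteq \varepsilon_iR\cap R\varepsilon_i$ for $i=1,\dots,r-1$ and $\varepsilon_1,\dots,\varepsilon_{r-1}$ are invariant elements. *)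

From HB Require Import structures.
From mathcomp Require Import all_boot all_order all_algebra.
Set Implicit Arguments. Unset Strict Implicit. Unset Printing Implicit Defensive.
Import GRing.Theory.
Local Open Scope ring_scope.

Section Defs.
Variable R : nzRingType.

Definition twosided_ideal (I : R -> Prop) : Prop :=
  [/\ I 0, (forall x y, I x -> I y -> I (x + y)),
      (forall r x, I x -> I (r * x)) & (forall r x, I x -> I (x * r))].

Definition simple_ring : Prop :=
  forall I : R -> Prop, twosided_ideal I ->
    (forall x, I x -> x = 0) \/ (forall x, I x).

(* domain: no zero divisors (1 != 0 is part of nzRingType) *)
Definition domain : Prop := forall a b : R, a * b = 0 -> a = 0 \/ b = 0.

Definition in_rideal_gen (s : seq R) (x : R) : Prop :=
  exists c : 'I_(size s) -> R, x = \sum_(i < size s) s`_i * c i.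
Definition in_lideal_gen (s : seq R) (x : R) : Prop :=
  exists c : 'I_(size s) -> R, x = \sum_(i < size s) c i * s`_i.

Definition bezout_domain : Prop :=
  domain /\
  (forall s : seq R, exists d : R,
     forall x, in_rideal_gen s x <-> exists t, x = d * t) /\
  (forall s : seq R, exists d : R,
     forall x, in_lideal_gen s x <-> exists t, x = t * d).

(* invariant element: nonzero a with aR = Ra *)
Definition invariant (a : R) : Prop :=
  a != 0 /\ (forall t, exists t', a * t = t' * a) /\
  (forall t, exists t', t * a = a * t').

Definition in_twosided_gen (x y : R) : Prop :=
  exists (k : nat) (a b : 'I_k -> R), y = \sum_(i < k) a i * x * b i.

Definition invertible_mx (n : nat) (P : 'M[R]_n) : Prop :=
  exists P' : 'M[R]_n, P *m P' = 1%:M /\ P' *m P = 1%:M.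

Definition diag_rect (m n r : nat) (eps : nat -> R) : 'M[R]_(m, n) :=
  \matrix_(i < m, j < n) (if (i == j :> nat) && (i < r)%N then eps i else 0).

Definition DK_elementary_divisor_ring : Prop :=
  forall (m n : nat) (A : 'M[R]_(m, n)),
    exists (P : 'M[R]_m) (Q : 'M[R]_n) (r : nat) (eps : nat -> R),
      invertible_mx P /\ invertible_mx Q /\
          P *m A *m Q = diag_rect m n r eps /\
          (r <= minn m n)%N /\
          (forall i, (i < r)%N -> eps i != 0) /\
          (forall i, (i.+1 < r)%N -> forall y, in_twosided_gen (eps i.+1) y ->
              (exists t, y = eps i * t) /\ (exists t, y = t * eps i)) /\
          (forall i, (i.+1 < r)%N -> invariant (eps i)).

End Defs.

(* (=>) Diagonalize a I_2 for a != 0.  Since a I_2 has no zero column, neither has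
   an equivalent diagonal matrix, so both diagonal entries are nonzero and the first,
   eps, is invariant.  In a simple ring the two-sided ideal eps R = R eps is all of R,
   so eps t = 1 for some t; expanding eps = (P a I_2 Q)_00 = P_00 a Q_00 + P_01 a Q_10
   and multiplying by t gives the identity.
   (<=) Over a Bezout domain a unimodular row or column of length 2 completes to an
   invertible 2 x 2 matrix, so a column can be reduced to (g, 0, ..., 0).  If an entry
   outside the first row and column is nonzero, two-simplicity yields a unimodular row
   and column turning the corner entry into 1, which then clears its row and column;
   otherwise a row reduction leaves a single nonzero entry.  By induction every matrix
   is equivalent to diag(1, ..., 1, e, 0, ..., 0), and such a matrix satisfies the
   divisibility and invariance conditions trivially. *)

From Pilot Require Import Defs.
From HB Require Import structures.
From mathcomp Require Import all_boot all_order all_algebra.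
Set Implicit Arguments. Unset Strict Implicit. Unset Printing Implicit Defensive.
Import GRing.Theory.
Local Open Scope ring_scope.

Definition two_simple (R : nzRingType) : Prop :=
  forall a : R, a != 0 -> exists u1 u2 v1 v2 : R, u1 * a * v1 + u2 * a * v2 = 1.

Section Domain.
Variables (R : nzRingType) (domR : domain R).

Lemma domain_mulf_eq0 (a b : R) : (a * b == 0) = (a == 0) || (b == 0).
Proof.
apply/eqP/orP => [/domR [] ->|[] /eqP ->]; rewrite ?eqxx ?mul0r ?mulr0 //; by [left|right].
Qed.

Lemma domain_mulfI (a : R) : a != 0 -> injective ( *%R a).
Proof.
move=> a0 x y /eqP; rewrite -subr_eq0 -mulrBr domain_mulf_eq0 (negPf a0) subr_eq0.
by move/eqP.
Qed.

Lemma domain_mulIf (a : R) : a != 0 -> injective ( *%R^~ a).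
Proof.
move=> a0 x y /eqP; rewrite -subr_eq0 -mulrBl domain_mulf_eq0 (negPf a0) orbF subr_eq0.
by move/eqP.
Qed.

Lemma domain_mulr_eq1C (x y : R) : x * y = 1 -> y * x = 1.
Proof.
move=> xy1; have y0 : y != 0 by apply: contra_eq_neq xy1 => ->; rewrite mulr0 eq_sym oner_neq0.
by apply: (domain_mulIf y0); rewrite /= -mulrA xy1 mulr1 mul1r.
Qed.

End Domain.

Lemma domain_conv (R : nzRingType) : domain R -> domain R^c.
Proof. by move=> domR a b /domR []; [right|left]. Qed.

Lemma bezout_domain_conv (R : nzRingType) : bezout_domain R -> bezout_domain R^c.
Proof. by case=> /domain_conv domRc [rB lB]. Qed.

Definition inverse2 (R : nzRingType) (g00 g01 g10 g11 h00 h01 h10 h11 : R) : Prop :=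
  [/\ g00 * h00 + g01 * h10 = 1, g00 * h01 + g01 * h11 = 0,
      g10 * h00 + g11 * h10 = 0 & g10 * h01 + g11 * h11 = 1] /\
  [/\ h00 * g00 + h01 * g10 = 1, h00 * g01 + h01 * g11 = 0,
      h10 * g00 + h11 * g10 = 0 & h10 * g01 + h11 * g11 = 1].

Lemma inverse2_conv (R : nzRingType) (g00 g01 g10 g11 h00 h01 h10 h11 : R) :
  @inverse2 R^c g00 g01 g10 g11 h00 h01 h10 h11 ->
  inverse2 g00 g10 g01 g11 h00 h10 h01 h11.
Proof. by case=> -[? ? ? ?] [? ? ? ?]; split; split. Qed.

Section Bezout.
Variables (R : nzRingType) (bezR : bezout_domain R).

Let domR : domain R := bezR.1.

Lemma bezout_lgcd (a b : R) :
  exists d x y a' b', d = x * a + y * b /\ a = a' * d /\ b = b' * d.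
Proof.
have [d Hd] := bezR.2.2 [:: a; b].
have [c Hc] := (Hd d).2 (ex_intro _ 1 (esym (mul1r d))).
have [a' Ha] : exists t, a = t * d.
  apply/Hd; exists (fun i : 'I_2 => (val i == 0%N)%:R).
  by rewrite big_ord_recr big_ord1 /= mul1r mul0r addr0.
have [b' Hb] : exists t, b = t * d.
  apply/Hd; exists (fun i : 'I_2 => (val i == 1%N)%:R).
  by rewrite big_ord_recr big_ord1 /= mul0r mul1r add0r.
exists d, (c ord0), (c ord_max), a', b'; split=> //.
by rewrite {1}Hc big_ord_recr big_ord1; congr (c _ * _ + _); apply: val_inj.
Qed.

(* The left kernel {(s, t) | s a + t b = 0} of the column [a; b] is spanned by the
   rows of 1 - [a; b] [x y]; since a != 0 it embeds into R by (s, t) |-> t, so it is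
   the free module generated by (s0, t0), where R t0 is the left gcd of the second
   coordinates of those rows. *)
Lemma complete_unimodular_row (x y a b : R) : x * a + y * b = 1 ->
  exists s t g h, inverse2 x y s t a g b h.
Proof.
move=> xy1; have [a_eq0|a0] := eqVneq a 0.
  have yb1 : y * b = 1 by rewrite -xy1 a_eq0 mulr0 add0r.
  exists 1, 0, 1, (- (b * x)).
  rewrite /inverse2 a_eq0 !(mulr0, mul0r, mulr1, mul1r, addr0, add0r) yb1.
  rewrite (domain_mulr_eq1C domR yb1).
  by rewrite mulrN mulrA yb1 mul1r !subrr.
have [t0 [al [be [ga [de [Ht0 [Hga Hde]]]]]]] := bezout_lgcd (- (a * y)) (1 - b * y).
pose s0 := al * (1 - a * x) + be * (- (b * x)).
have K1 : (1 - a * x) * a + (- (a * y)) * b = 0.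
  by rewrite mulrBl mul1r mulNr -addrA -opprD -!mulrA -mulrDr xy1 mulr1 subrr.
have K2 : (- (b * x)) * a + (1 - b * y) * b = 0.
  by rewrite mulrBl mul1r mulNr addrCA -opprD -!mulrA -mulrDr xy1 mulr1 subrr.
have kerst : s0 * a = - (t0 * b).
  apply/eqP; rewrite -addr_eq0; apply/eqP.
  by rewrite /s0 Ht0 !mulrDl -!mulrA addrACA -!mulrDr K1 K2 !mulr0 addr0.
have E1 : a * x + ga * s0 = 1.
  suff -> : ga * s0 = 1 - a * x by rewrite addrC subrK.
  apply: (domain_mulIf domR a0); rewrite /= -mulrA kerst mulrN mulrA -Hga.
  by apply/eqP; rewrite eq_sym -addr_eq0 K1.
have E2 : a * y + ga * t0 = 0 by rewrite -Hga subrr.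
have E3 : b * x + de * s0 = 0.
  suff -> : de * s0 = - (b * x) by rewrite subrr.
  apply: (domain_mulIf domR a0); rewrite /= -mulrA kerst mulrN mulrA -Hde.
  by apply/eqP; rewrite eq_sym -addr_eq0 K2.
have E4 : b * y + de * t0 = 1 by rewrite -Hde addrC subrK.
have t00 : t0 != 0.
  apply/eqP => t0_eq0; move/eqP: E2; rewrite t0_eq0 mulr0 addr0.
  rewrite domain_mulf_eq0 // (negPf a0) => /eqP y0.
  by move/eqP: E4; rewrite t0_eq0 y0 !mulr0 addr0 eq_sym oner_eq0.
have F1 : x * ga + y * de = 0.
  apply: (domain_mulIf domR t00); rewrite /= mul0r mulrDl -!mulrA -Hga -Hde.
  by rewrite mulrN mulrBr mulr1 !mulrA addrCA -opprD -mulrDl xy1 mul1r subrr.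
have F2 : s0 * ga + t0 * de = 1.
  apply: (domain_mulIf domR t00); rewrite /= mul1r mulrDl -!mulrA -Hga -Hde.
  by rewrite mulrN mulrBr mulr1 !mulrA kerst mulNr opprK addrCA subrr addr0.
have Hk : s0 * a + t0 * b = 0 by rewrite kerst addNr.
by exists s0, t0, ga, de; split; split.
Qed.

Lemma col_reduce2 (a b : R) : exists g00 g01 g10 g11 h00 h01 h10 h11,
  inverse2 g00 g01 g10 g11 h00 h01 h10 h11 /\ g10 * a + g11 * b = 0.
Proof.
have [/andP [/eqP -> /eqP ->]|ab0] := boolP ((a == 0) && (b == 0)).
  exists 1, 0, 0, 1, 1, 0, 0, 1.
  by rewrite /inverse2 !(mulr0, mul0r, mulr1, addr0, add0r).
have [d [x [y [a' [b' [Hd [Ha Hb]]]]]]] := bezout_lgcd a b.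
have d0 : d != 0 by apply: contra ab0 => /eqP d0; rewrite Ha Hb d0 !mulr0 eqxx.
have xy1 : x * a' + y * b' = 1.
  by apply: (domain_mulIf domR d0); rewrite /= mul1r mulrDl -!mulrA -Ha -Hb.
have [s [t [g [h inv]]]] := complete_unimodular_row xy1.
have [[_ _ st0 _] _] := inv.
exists x, y, s, t, a', g, b', h; split=> //.
by rewrite Ha Hb !mulrA -mulrDl st0 mul0r.
Qed.

End Bezout.

Section BezoutConv.
Variables (R : nzRingType) (bezR : bezout_domain R).

Let domR : domain R := bezR.1.

Lemma complete_unimodular_col (x y a b : R) : a * x + b * y = 1 ->
  exists s t g h, inverse2 x s y t a b g h.
Proof.
move=> xy1; have [s [t [g [h inv]]]] :=
  @complete_unimodular_row _ (bezout_domain_conv bezR) x y a b xy1.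
by exists s, t, g, h; apply: inverse2_conv.
Qed.

Lemma bezout_rgcd (a b : R) :
  exists d x y a' b', d = a * x + b * y /\ a = d * a' /\ b = d * b'.
Proof.
have [d [x [y [a' [b' eqs]]]]] := @bezout_lgcd _ (bezout_domain_conv bezR) a b.
by exists d, x, y, a', b'.
Qed.

Lemma bezout_right_ore (g w : R) : g != 0 -> exists s t, s != 0 /\ w * s = g * t.
Proof.
move=> g0; have [e [x [y [g' [w' [He [Hg Hw]]]]]]] := bezout_rgcd g w.
have e0 : e != 0 by apply: contra_neq g0 => e0; rewrite Hg e0 mul0r.
have g'0 : g' != 0 by apply: contra_neq g0 => g'0; rewrite Hg g'0 mulr0.
have xy1 : g' * x + w' * y = 1.
  by apply: (domain_mulfI domR e0); rewrite /= mulr1 mulrDr !mulrA -Hg -Hw.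
have [s [t [G [H [[_ gw0 _ st1] _]]]]] := complete_unimodular_row bezR xy1.
have H0 : H != 0.
  apply: contra_eq_neq st1 => H0; move: gw0; rewrite H0 mulr0 addr0 => /eqP.
  by rewrite domain_mulf_eq0 // (negPf g'0) => /eqP ->; rewrite !mulr0 addr0 eq_sym oner_neq0.
exists H, (- G); split=> //.
by rewrite Hw Hg -!mulrA; congr (e * _); apply/eqP; rewrite mulrN -addr_eq0 addrC gw0.
Qed.

End BezoutConv.

Section Equivalence.
Variable R : nzRingType.

Definition mx_equiv m n (A B : 'M[R]_(m, n)) : Prop :=
  exists P Q, [/\ invertible_mx P, invertible_mx Q & P *m A *m Q = B].

Lemma invertible_mx1 n : invertible_mx (1%:M : 'M[R]_n).
Proof. by exists 1%:M; rewrite mul1mx. Qed.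

Lemma invertible_mxM n (P P' : 'M[R]_n) :
  invertible_mx P -> invertible_mx P' -> invertible_mx (P *m P').
Proof.
move=> [Pi [PPi PiP]] [P'i [P'P'i P'iP']]; exists (P'i *m Pi).
by rewrite !mulmxA -(mulmxA P) P'P'i -(mulmxA P'i) PiP mulmx1 mulmx1.
Qed.

Lemma mx_equiv_refl m n (A : 'M[R]_(m, n)) : mx_equiv A A.
Proof. by exists 1%:M, 1%:M; rewrite mul1mx mulmx1; split=> //; apply: invertible_mx1. Qed.

Lemma mx_equiv_trans m n (A B C : 'M[R]_(m, n)) :
  mx_equiv A B -> mx_equiv B C -> mx_equiv A C.
Proof.
move=> [P [Q [HP HQ <-]]] [P' [Q' [HP' HQ' <-]]].
by exists (P' *m P), (Q *m Q'); split; [exact: invertible_mxM..|rewrite !mulmxA].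
Qed.

Lemma mx_equiv_mull m n (P : 'M[R]_m) (A : 'M[R]_(m, n)) :
  invertible_mx P -> mx_equiv A (P *m A).
Proof. by exists P, 1%:M; rewrite mulmx1; split=> //; apply: invertible_mx1. Qed.

Lemma mx_equiv_mulr m n (Q : 'M[R]_n) (A : 'M[R]_(m, n)) :
  invertible_mx Q -> mx_equiv A (A *m Q).
Proof. by exists 1%:M, Q; rewrite mul1mx; split=> //; apply: invertible_mx1. Qed.

End Equivalence.

Lemma invertible_mx_tr (R : nzRingType) n (P : 'M[R]_n) :
  invertible_mx P -> invertible_mx (P^T : 'M[R^c]_n).
Proof. by case=> P' [PP' P'P]; exists P'^T; rewrite -!trmx_mul_rev P'P PP' trmx1. Qed.

Lemma sum_only2 (R : nzRingType) (I : finType) (i k : I) (F : I -> R) : i != k ->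
  (forall l, l != i -> l != k -> F l = 0) -> \sum_l F l = F i + F k.
Proof.
move=> ik F0; rewrite (bigD1 i) //= (bigD1 k) 1?eq_sym //= big1 ?addr0 // => l.
by move=> /andP[li lk]; apply: F0.
Qed.

Section Embed2.
Variables (R : nzRingType) (n : nat) (k : 'I_n.+1).
Hypothesis k0 : k != ord0.

Let k0' : ord0 != k. Proof. by rewrite eq_sym. Qed.

Definition embed2_mx (a b c d : R) : 'M[R]_n.+1 :=
  \matrix_(i, j) if i == ord0 then (if j == ord0 then a else if j == k then b else 0)
   else if i == k then (if j == ord0 then c else if j == k then d else 0)
   else (i == j)%:R.

Lemma mul_embed2_mx p (a b c d : R) (A : 'M[R]_(n.+1, p)) :
  embed2_mx a b c d *m A =
  \matrix_(i, j) if i == ord0 then a * A ord0 j + b * A k j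
     else if i == k then c * A ord0 j + d * A k j else A i j.
Proof.
apply/matrixP => i j; rewrite !mxE.
have [i0|i0] := eqVneq i ord0; last have [ik|ik] := eqVneq i k.
- rewrite (sum_only2 k0') => [|l l0 lk]; rewrite !mxE i0 !eqxx ?(negPf k0) //.
  by rewrite (negPf l0) (negPf lk) mul0r.
- rewrite (sum_only2 k0') => [|l l0 lk]; rewrite !mxE ik !eqxx ?(negPf k0) //.
  by rewrite (negPf l0) (negPf lk) mul0r.
rewrite (big_only1 i) // => [|l li _]; rewrite !mxE (negPf i0) (negPf ik) ?eqxx ?mul1r //.
by rewrite eq_sym (negPf li) mul0r.
Qed.

Lemma mul_mx_embed2 p (a b c d : R) (A : 'M[R]_(p, n.+1)) :
  A *m embed2_mx a b c d =
  \matrix_(i, j) if j == ord0 then A i ord0 * a + A i k * c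
     else if j == k then A i ord0 * b + A i k * d else A i j.
Proof.
apply/matrixP => i j; rewrite !mxE.
have [j0|j0] := eqVneq j ord0; last have [jk|jk] := eqVneq j k.
- rewrite (sum_only2 k0') => [|l l0 lk]; rewrite !mxE j0 !eqxx ?(negPf k0) //.
  by rewrite (negPf l0) (negPf lk) mulr0.
- rewrite (sum_only2 k0') => [|l l0 lk]; rewrite !mxE jk !eqxx ?(negPf k0) //.
  by rewrite (negPf l0) (negPf lk) mulr0.
rewrite (big_only1 j) // => [|l lj _]; rewrite !mxE (negPf j0) (negPf jk) ?eqxx ?mulr1 //.
by rewrite (negPf lj); case: (l == ord0); case: (l == k); rewrite mulr0.
Qed.

Lemma embed2_mx_invertible (a b c d a' b' c' d' : R) :
  inverse2 a b c d a' b' c' d' -> invertible_mx (embed2_mx a b c d).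
Proof.
have embed2_mul_eq1 x y z w x' y' z' w' :
    [/\ x * x' + y * z' = 1, x * y' + y * w' = 0,
        z * x' + w * z' = 0 & z * y' + w * w' = 1] ->
    embed2_mx x y z w *m embed2_mx x' y' z' w' = 1%:M.
  case=> e00 e01 e10 e11; rewrite mul_embed2_mx; apply/matrixP => i j.
  rewrite !mxE !eqxx (negPf k0).
  have [i0|i0] := eqVneq i ord0; last have [ik|ik] := eqVneq i k.
  - have [j0|j0] := eqVneq j ord0; last have [jk|jk] := eqVneq j k.
    + by rewrite i0 j0 e00.
    + by rewrite i0 jk (negPf k0') e01.
    + by rewrite !mulr0 addr0 i0 eq_sym (negPf j0).
  - have [j0|j0] := eqVneq j ord0; last have [jk|jk] := eqVneq j k.
    + by rewrite ik j0 e10 (negPf k0).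
    + by rewrite ik jk e11 eqxx.
    + by rewrite !mulr0 addr0 ik eq_sym (negPf jk).
  - by [].
by case=> inv inv'; exists (embed2_mx a' b' c' d'); split; apply: embed2_mul_eq1.
Qed.

End Embed2.

Section Reduce.
Variables (R : nzRingType) (bezR : bezout_domain R).

Lemma col_reduce_mx m n (A : 'M[R]_(m.+1, n)) (j : 'I_n) :
  exists P g, invertible_mx P /\ forall i, (P *m A) i j = if i == ord0 then g else 0.
Proof.
suff [P [HP PA0]] : exists P, invertible_mx P /\
    forall i : 'I_m.+1, (0 < i <= m)%N -> (P *m A) i j = 0.
  exists P, ((P *m A) ord0 j); split=> // i.
  have [->|i0] := eqVneq i ord0; first by [].
  by apply: PA0; rewrite lt0n -ltnS ltn_ord andbT; apply: contra_neq i0 => ?; exact: val_inj.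
suff clear_upto k : (k <= m)%N -> exists P, invertible_mx P /\
    forall i : 'I_m.+1, (0 < i <= k)%N -> (P *m A) i j = 0 by apply: clear_upto.
elim: k => [|k IHk] km.
  exists 1%:M; split=> [|i]; first exact: invertible_mx1.
  by rewrite leqn0 andbC; case: eqP => // ->.
have [P [HP PA0]] := IHk (ltnW km).
pose K : 'I_m.+1 := inord k.+1.
have KE : K = k.+1 :> nat by rewrite /K inordK // ltnS.
have K0 : K != ord0 by rewrite -val_eqE /= KE.
have [g00 [g01 [g10 [g11 [h00 [h01 [h10 [h11 [inv Hg]]]]]]]]] :=
  col_reduce2 bezR ((P *m A) ord0 j) ((P *m A) K j).
exists (embed2_mx K g00 g01 g10 g11 *m P); split.
  by apply: invertible_mxM => //; apply: embed2_mx_invertible inv.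
move=> i /andP [i_gt0 ik]; rewrite -mulmxA mul_embed2_mx // mxE.
have [->|iK] := eqVneq i K; first by rewrite (negPf K0).
rewrite -(inj_eq val_inj) /= eqn0Ngt i_gt0 /=; apply: PA0; rewrite i_gt0 /=.
by move: ik; rewrite leq_eqVlt ltnS -KE (inj_eq val_inj) (negPf iK).
Qed.

End Reduce.

Lemma row_reduce_mx (R : nzRingType) (bezR : bezout_domain R) m n
    (A : 'M[R]_(m, n.+1)) (i : 'I_m) :
  exists Q g, invertible_mx Q /\ forall j, (A *m Q) i j = if j == ord0 then g else 0.
Proof.
have [P [g [HP PA]]] :=
  @col_reduce_mx _ (bezout_domain_conv bezR) _ _ (A^T : 'M[R^c]_(n.+1, m)) i.
exists P^T, g; split; first exact: (invertible_mx_tr HP).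
by move=> j; rewrite -PA -[A *m P^T]trmxK trmx_mul_rev trmxK mxE.
Qed.

Section Blocks.
Variable R : nzRingType.

Lemma invertible_block_diag m n (P : 'M[R]_m) (P' : 'M[R]_n) :
  invertible_mx P -> invertible_mx P' -> invertible_mx (block_mx P 0 0 P').
Proof.
move=> [Pi [PPi PiP]] [P'i [P'P'i P'iP']]; exists (block_mx Pi 0 0 P'i).
by rewrite !mulmx_block !(mulmx0, mul0mx, addr0, add0r) PPi PiP P'P'i P'iP' -scalar_mx_block.
Qed.

Lemma invertible_lower_mx m n (v : 'M[R]_(n, m)) :
  invertible_mx (block_mx 1%:M 0 v 1%:M).
Proof.
exists (block_mx 1%:M 0 (- v) 1%:M); rewrite !mulmx_block.
by rewrite !(mulmx0, mul0mx, mul1mx, mulmx1, addr0, add0r) subrr addNr -scalar_mx_block.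
Qed.

Lemma invertible_upper_mx m n (u : 'M[R]_(m, n)) :
  invertible_mx (block_mx 1%:M u 0 1%:M).
Proof.
exists (block_mx 1%:M (- u) 0 1%:M); rewrite !mulmx_block.
by rewrite !(mulmx0, mul0mx, mul1mx, mulmx1, addr0, add0r) subrr addNr -scalar_mx_block.
Qed.

Lemma mx_equiv_block1 m n (B D : 'M[R]_(m, n)) : mx_equiv B D ->
  mx_equiv (block_mx (1%:M : 'M_1) 0 0 B) (block_mx 1%:M 0 0 D).
Proof.
move=> [P [Q [HP HQ <-]]]; exists (block_mx 1%:M 0 0 P), (block_mx 1%:M 0 0 Q).
split; [exact: invertible_block_diag (invertible_mx1 _ _) _..|].
by rewrite !mulmx_block !(mulmx0, mul0mx, mul1mx, mulmx1, addr0, add0r).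
Qed.

Lemma mx_equiv_pivot1 m n (A : 'M[R]_(1 + m, 1 + n)) :
  A ord0 ord0 = 1 -> exists B, mx_equiv A (block_mx (1%:M : 'M_1) 0 0 B).
Proof.
move=> A00; have ul1 : ulsubmx A = 1%:M.
  by apply/matrixP => i j; rewrite !ord1 !mxE -A00; congr (A _ _); apply: val_inj.
rewrite -[A]submxK ul1; exists (drsubmx A - dlsubmx A *m ursubmx A).
exists (block_mx 1%:M 0 (- dlsubmx A) 1%:M), (block_mx 1%:M (- ursubmx A) 0 1%:M).
split; [exact: invertible_lower_mx | exact: invertible_upper_mx |].
rewrite !mulmx_block !(mulmx0, mul0mx, mul1mx, mulmx1, addr0, add0r, mulNmx, mulmxN).
by rewrite !addNr mul0mx oppr0 add0r addrC.
Qed.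

End Blocks.

Section Diagonalization.
Variables (R : nzRingType) (bezR : bezout_domain R).

Let domR : domain R := bezR.1.

Lemma first_col_reduce m n (A : 'M[R]_(m.+1, n.+1)) : A != 0 -> exists A' g,
  [/\ mx_equiv A A', g != 0 & forall i, A' i ord0 = if i == ord0 then g else 0].
Proof.
case/matrix0Pn=> i [j Aij]; have [P [g [HP PA]]] := col_reduce_mx bezR A j.
have g0 : g != 0.
  apply: contra_neq Aij => g0; have [P' [_ P'P]] := HP.
  rewrite -[A]mul1mx -P'P -mulmxA mxE (big_only1 ord0) // => [|l l0 _].
    by rewrite PA eqxx g0 mulr0.
  by rewrite PA (negPf l0) mulr0.
have [j0|j0] := eqVneq j ord0.
  by exists (P *m A), g; split=> //; [apply: mx_equiv_mull | rewrite -j0].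
pose S : 'M[R]_n.+1 := embed2_mx j 0 1 1 0.
have S_inv : invertible_mx S.
  apply: (embed2_mx_invertible j0 (a' := 0) (b' := 1) (c' := 1) (d' := 0)).
  by split; split; rewrite !(mul0r, mul1r, addr0, add0r).
exists (P *m A *m S), g; split=> //.
  exact: mx_equiv_trans (mx_equiv_mull A HP) (mx_equiv_mulr _ S_inv).
by move=> i'; rewrite mul_mx_embed2 // mxE eqxx mulr0 add0r mulr1 PA.
Qed.

Lemma row0_mx_equiv m n (A : 'M[R]_(m.+1, n.+1)) : A != 0 ->
  (forall i j, i != ord0 -> A i j = 0) ->
  exists e, e != 0 /\ mx_equiv A (diag_rect m.+1 n.+1 1 (fun=> e)).
Proof.
move=> A0 Arow0; have [Q [h [HQ AQ0]]] := row_reduce_mx bezR A ord0.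
have AQ : A *m Q = diag_rect m.+1 n.+1 1 (fun=> h).
  apply/matrixP => i j; rewrite [RHS]mxE.
  have [->|i0] := eqVneq i ord0; first by rewrite AQ0 andbT eq_sym.
  rewrite mxE big1 => [|l _]; last by rewrite Arow0 ?mul0r.
  by rewrite ltnS leqn0 -[_ == 0%N]/(i == ord0) (negPf i0) andbF.
exists h; split; last by rewrite -AQ; apply: mx_equiv_mulr.
apply: contra_neq A0 => h0; have [Q' [QQ' _]] := HQ.
rewrite -[A]mulmx1 -QQ' mulmxA AQ h0; apply/matrixP => i j.
by rewrite !mxE big1 // => l _; rewrite /diag_rect mxE if_same mul0r.
Qed.

Hypothesis twoR : two_simple R.

(* With c := g b s, where w s = g t is a right Ore multiple, two-simplicity gives
   u1 c v1 + u2 c v2 = 1.  The row (u1, u2 g) on rows 0, k and the column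
   (b s v1 - t v2, s v2) on columns 0, l then evaluate A to 1, the relation
   w s = g t cancelling the cross terms; both are unimodular, hence complete
   to invertible matrices. *)
Lemma two_simple_pivot m n (A : 'M[R]_(m.+1, n.+1)) g k l :
  g != 0 -> (forall i, A i ord0 = if i == ord0 then g else 0) ->
  k != ord0 -> l != ord0 -> A k l != 0 ->
  exists B, mx_equiv A (block_mx (1%:M : 'M_1) 0 0 B).
Proof.
move=> g0 Acol0 k0 l0 b0; set w := A ord0 l; set b := A k l.
have [s [t [s0 wst]]] := bezout_right_ore bezR w g0.
have c0 : g * b * s != 0 by rewrite !(domain_mulf_eq0 domR) (negPf g0) (negPf b0) (negPf s0).
have [u1 [u2 [v1 [v2 u1v]]]] := twoR c0.
pose q0 := b * s * v1 - t * v2; pose ql := s * v2.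
have gq0 : g * q0 + w * ql = g * b * s * v1.
  by rewrite /q0 /ql mulrBr mulrA wst -!mulrA subrK.
have row1 : u1 * (g * q0 + w * ql) + u2 * g * (b * ql) = 1.
  by rewrite gq0 -u1v !mulrA.
clearbody q0 ql.
have [s1 [t1 [g1 [h1 inv1]]]] := complete_unimodular_row bezR row1.
have col1 : u1 * g * q0 + (u1 * w + u2 * g * b) * ql = 1.
  by rewrite -row1 mulrDl mulrDr -!mulrA addrA.
have [s2 [t2 [g2 [h2 inv2]]]] := complete_unimodular_col bezR col1.
pose P := embed2_mx k u1 (u2 * g) s1 t1; pose Q := embed2_mx l q0 s2 ql t2.
have [B PAQ] : exists B : 'M_(m, n), mx_equiv (P *m A *m Q) (block_mx (1%:M : 'M_1) 0 0 B).
  apply: mx_equiv_pivot1; rewrite mul_mx_embed2 // mxE mul_embed2_mx // !mxE !eqxx.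
  by rewrite !Acol0 eqxx (negPf k0) mulr0 addr0.
exists B; apply: mx_equiv_trans PAQ; exists P, Q.
by split=> //; [exact: embed2_mx_invertible inv1 | exact: embed2_mx_invertible inv2].
Qed.

Lemma two_simple_mx_equiv_step m n (A : 'M[R]_(m.+1, n.+1)) : A != 0 ->
  (exists B, mx_equiv A (block_mx (1%:M : 'M_1) 0 0 B)) \/
  (exists e, e != 0 /\ mx_equiv A (diag_rect m.+1 n.+1 1 (fun=> e))).
Proof.
move=> A0; have [A' [g [AA' g0 A'col0]]] := first_col_reduce A0.
have [/existsP[k /existsP[l /and3P[k0 l0 A'kl]]]|/existsPn A'rows0] :=
  boolP [exists k, exists l, [&& k != ord0, l != ord0 & A' k l != 0]].
  have [B A'B] := two_simple_pivot g0 A'col0 k0 l0 A'kl.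
  by left; exists B; apply: mx_equiv_trans A'B.
have A'0 : A' != 0 by apply/matrix0Pn; exists ord0, ord0; rewrite A'col0 eqxx.
have A'row0 i j : i != ord0 -> A' i j = 0.
  move=> i0; have [->|j0] := eqVneq j ord0; first by rewrite A'col0 (negPf i0).
  by apply/eqP; move/existsPn: (A'rows0 i) => /(_ j); rewrite i0 j0 negbK.
have [e [e0 A'e]] := row0_mx_equiv A'0 A'row0.
by right; exists e; split=> //; apply: mx_equiv_trans A'e.
Qed.

End Diagonalization.

Section OnesLast.
Variable R : nzRingType.

Definition ones_last (r : nat) (e : R) (i : nat) : R := if (i.+1 < r)%N then 1 else e.

Lemma diag_rect0 m n (eps : nat -> R) : diag_rect m n 0 eps = 0.
Proof. by apply/matrixP => i j; rewrite !mxE andbF. Qed.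

(* For r = 0 the new last entry is the pivot 1 itself. *)
Lemma block1_diag_rect_ones_last m n r (e : R) :
  block_mx (1%:M : 'M_1) 0 0 (diag_rect m n r (ones_last r e)) =
  diag_rect m.+1 n.+1 r.+1 (ones_last r.+1 (if r == 0%N then 1 else e)).
Proof.
apply/matrixP => i j; rewrite [RHS]mxE.
case: (@split_ordP 1 m i) => i' ->; case: (@split_ordP 1 n j) => j' ->.
- by rewrite block_mxEul !ord1 mxE /ones_last; case: r.
- by rewrite block_mxEur mxE ord1.
- by rewrite block_mxEdl mxE ord1.
rewrite block_mxEdr mxE /= eqSS !add1n !ltnS /ones_last.
by case: (_ == _) => //=; case: ltnP => // ir; case: r ir.
Qed.

End OnesLast.

Section TwoSimple.
Variables (R : nzRingType) (bezR : bezout_domain R) (twoR : two_simple R).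

Lemma two_simple_diag m n (A : 'M[R]_(m, n)) : exists r e,
  [/\ (r <= minn m n)%N, e != 0 & mx_equiv A (diag_rect m n r (ones_last r e))].
Proof.
elim: m n A => [|m IHm] n A; have [->|A0] := eqVneq A 0;
  try by exists 0%N, 1; rewrite diag_rect0 oner_neq0; split=> //; apply: mx_equiv_refl.
  by rewrite flatmx0 eqxx in A0.
case: n A A0 => [|n] A A0; first by rewrite thinmx0 eqxx in A0.
have [[B AB]|[e [e0 Ae]]] := two_simple_mx_equiv_step bezR twoR A0; last first.
  by exists 1%N, e; rewrite minnSS.
have [r [e [r_le e0 BD]]] := IHm n B.
exists r.+1, (if r == 0%N then 1 else e); split.
- by rewrite minnSS ltnS.
- by case: (r == 0%N); rewrite ?oner_neq0.
by rewrite -block1_diag_rect_ones_last; apply: mx_equiv_trans AB (mx_equiv_block1 BD).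
Qed.

Lemma two_simple_DK : DK_elementary_divisor_ring R.
Proof.
move=> m n A; have [r [e [r_le e0 [P [Q [HP HQ PAQ]]]]]] := two_simple_diag A.
have eps_nz i : ones_last r e i != 0 by rewrite /ones_last; case: ifP; rewrite ?oner_neq0.
exists P, Q, r, (ones_last r e); do 4!split=> //; split=> [i _|]; first exact: eps_nz.
split=> i ir; rewrite /ones_last ir.
  by move=> y _; split; exists y; rewrite (mul1r, mulr1).
by split; [exact: oner_neq0 | split=> t; exists t; rewrite mul1r mulr1].
Qed.

End TwoSimple.

Lemma simple_invariant_rinv (R : nzRingType) (e : R) :
  simple_ring R -> Defs.invariant e -> exists t, e * t = 1.
Proof.
move=> simR [e0 [_ eR_Re]].
have eR_ideal : twosided_ideal (fun x => exists t, x = e * t).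
  split=> [|_ _ [t ->] [t' ->]|r _ [t ->]|r _ [t ->]].
  - by exists 0; rewrite mulr0.
  - by exists (t + t'); rewrite mulrDr.
  - by have [t' et'] := eR_Re r; exists (t' * t); rewrite mulrA et' mulrA.
  - by exists (t * r); rewrite mulrA.
have [eR0|eR_full] := simR _ eR_ideal; last by have [t] := eR_full 1; exists t.
by move/eqP: e0; case; apply: eR0; exists 1; rewrite mulr1.
Qed.

Lemma scalar_mx_equiv_diag_full (R : nzRingType) n (a : R) (P Q : 'M[R]_n.+1) r eps :
  domain R -> a != 0 -> invertible_mx P -> invertible_mx Q ->
  P *m a%:M *m Q = diag_rect n.+1 n.+1 r eps -> (n < r)%N.
Proof.
move=> domR a0 [P' [_ P'P]] [Q' [_ Q'Q]] PaQ; rewrite ltnNge; apply/negP => r_le.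
have aQ : a *: Q = P' *m diag_rect n.+1 n.+1 r eps.
  by rewrite -PaQ !mulmxA P'P mul1mx mul_scalar_mx.
have Q0 i : Q i ord_max = 0.
  apply: (domain_mulfI domR a0); rewrite /= mulr0.
  move/matrixP: aQ => /(_ i ord_max); rewrite !mxE => ->.
  rewrite big1 // => l _; rewrite mxE.
  by case: eqP => [/= ln|]; rewrite ?mulr0 // ln ltnNge r_le mulr0.
move/matrixP: Q'Q => /(_ ord_max ord_max).
rewrite !mxE big1 => [|l _]; last by rewrite Q0 mulr0.
by move/eqP; rewrite eqxx eq_sym oner_eq0.
Qed.

Lemma DK_two_simple (R : nzRingType) :
  simple_ring R -> domain R -> DK_elementary_divisor_ring R -> two_simple R.
Proof.
move=> simR domR DK a a0.
have [P [Q [r [eps [HP [HQ [PaQ [_ [_ [_ eps_inv]]]]]]]]]] := DK 2 2 (a%:M : 'M[R]_2).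
have r_gt1 := scalar_mx_equiv_diag_full domR a0 HP HQ PaQ.
have [t e0t] := simple_invariant_rinv simR (eps_inv 0%N r_gt1).
exists (P ord0 ord0), (P ord0 ord_max), (Q ord0 ord0 * t), (Q ord_max ord0 * t).
move/matrixP: PaQ => /(_ ord0 ord0).
rewrite [RHS]mxE /= (ltnW r_gt1) -mulmxA mul_scalar_mx mxE.
have lift_max : lift ord0 ord0 = ord_max :> 'I_2 by apply: val_inj.
rewrite big_ord_recl big_ord1 !mxE lift_max => e0.
by rewrite -e0t -e0 mulrDl -!mulrA.
Qed.

Theorem mainTheorem8 (R : nzRingType) :
  simple_ring R -> bezout_domain R ->
  (DK_elementary_divisor_ring R <->
   forall a : R, a != 0 ->
     exists u1 u2 v1 v2 : R, u1 * a * v1 + u2 * a * v2 = 1).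
Proof.
move=> simR bezR; split; first exact: DK_two_simple simR bezR.1.
exact: two_simple_DK.
Qed.
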